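(* For every $A\subseteq\mathbb{N}$, $$\underline{\underline{d}}(A)\le\underline{d}_\infty(A)\le\overline{d}_\infty(A)\le\overline{\overline{d}}(A).$$
   Context: $\mathbb{N}=\{1,2,3,\dots\}$. For $A\subseteq\mathbb{N}$ let $A(n)=|A\cap[1,n]|$; $\mathcal{D}$ is the collection of sets for which $d(A)=\lim_{n\to\infty}A(n)/n$ exists; $\underline{\underline{d}}(A)=\sup\{d(B);\ B\subseteq A,\ B\in\mathcal{D}\}$ and $\overline{\overline{d}}(A)=\inf\{d(C);\ C\supseteq A,\ C\in\mathcal{D}\}$. For $\alpha\ge-1$ put $A_\alpha(n)=\sum_{k=1}^n\chi_A(k)k^\alpha$, $\mathbb{N}_\alpha(n)=\sum_{k=1}^nk^\alpha$, $\underline{d}_\alpha(A)=\liminf_{n\to\infty}\frac{A_\alpha(n)}{\mathbb{N}_\alpha(n)}$, $\overline{d}_\alpha(A)=\limsup_{n\to\infty}\frac{A_\alpha(n)}{\mathbb{N}_\alpha(n)}$, $\underline{d}_\infty(A)=\inf_{\alpha\ge-1}\underline{d}_\alpha(A)$ and $\overline{d}_\infty(A)=\sup_{\alpha\ge-1}\overline{d}_\alpha(A)$ (these equal $\lim_{\alpha\to\infty}\underline{d}_\alpha(A)$ and $\lim_{\alpha\to\infty}\overline{d}_\alpha(A)$ respectively). *)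

From Stdlib Require Import Reals.
From Coquelicot Require Import Coquelicot.
Open Scope R_scope.

(* A subset of N = {1,2,3,...} is represented by a boolean predicate on nat;
   the value at 0 is irrelevant (it never enters any count). *)

Fixpoint cnt (A : nat -> bool) (n : nat) : R :=
  match n with
  | O => 0
  | S m => cnt A m + (if A (S m) then 1 else 0)
  end.

Definition has_density (A : nat -> bool) : Prop :=
  ex_finite_lim_seq (fun n => cnt A n / INR n).

Definition density (A : nat -> bool) : R :=
  real (Lim_seq (fun n => cnt A n / INR n)).

Definition dd_lower (A : nat -> bool) : Rbar :=
  Lub_Rbar (fun x => exists B : nat -> bool,
     (forall k, (1 <= k)%nat -> B k = true -> A k = true) /\
     has_density B /\ x = density B).

Definition dd_upper (A : nat -> bool) : Rbar :=
  Glb_Rbar (fun x => exists C : nat -> bool,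
     (forall k, (1 <= k)%nat -> A k = true -> C k = true) /\
     has_density C /\ x = density C).

Fixpoint wcnt (A : nat -> bool) (alpha : R) (n : nat) : R :=
  match n with
  | O => 0
  | S m => wcnt A alpha m + (if A (S m) then Rpower (INR (S m)) alpha else 0)
  end.

Definition Ncnt (alpha : R) (n : nat) : R := wcnt (fun _ => true) alpha n.

Definition d_lower_alpha (alpha : R) (A : nat -> bool) : Rbar :=
  LimInf_seq (fun n => wcnt A alpha n / Ncnt alpha n).

Definition d_upper_alpha (alpha : R) (A : nat -> bool) : Rbar :=
  LimSup_seq (fun n => wcnt A alpha n / Ncnt alpha n).

Definition d_lower_infty (A : nat -> bool) : Rbar :=
  Glb_Rbar (fun x => exists alpha, -1 <= alpha /\ d_lower_alpha alpha A = Finite x).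

Definition d_upper_infty (A : nat -> bool) : Rbar :=
  Lub_Rbar (fun x => exists alpha, -1 <= alpha /\ d_upper_alpha alpha A = Finite x).

From Stdlib Require Import Reals Lra Lia.
From Coquelicot Require Import Coquelicot.
Open Scope R_scope.

(* If B has density d, summation by parts gives
     B_alpha(n) - d N_alpha(n)
       = (B(n) - d n) n^alpha - sum_{k<n} (B(k) - d k) ((k+1)^alpha - k^alpha).
   As k^alpha is monotone, the sum beyond a fixed K is at most
   o(1) * |sum_k k ((k+1)^alpha - k^alpha)| = o(1) |n^(alpha+1) - N_alpha(n)|,
   and n^(alpha+1) = O(N_alpha(n)), while N_alpha(n) -> oo because alpha >= -1.
   Hence d_alpha(B) = d(B) for every such alpha, and the outer inequalities
   follow from the monotonicity of d_alpha in the set; the middle one is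
   liminf <= limsup at alpha = 0. *)

Lemma Rpower_pos x a : 0 < Rpower x a.
Proof. apply exp_pos. Qed.

Lemma Rpower_le_l_nonpos a b c : c <= 0 -> 0 < a <= b -> Rpower b c <= Rpower a c.
Proof.
  intros Hc Hab. rewrite <- (Ropp_involutive c), (Rpower_Ropp b), (Rpower_Ropp a).
  apply Rinv_le_contravar; [apply Rpower_pos|]. apply Rle_Rpower_l; lra.
Qed.

Lemma ln_1_plus_le x : 0 < x -> ln (1 + x) <= x.
Proof. intros Hx. rewrite <- (ln_exp x) at 2. apply ln_le; [lra|apply exp_ineq1_le]. Qed.

Definition inclN (B A : nat -> bool) : Prop :=
  forall k, (1 <= k)%nat -> B k = true -> A k = true.

Section Weights.

Variable alpha : R.

Local Notation w k := (Rpower (INR k) alpha).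

Lemma wcnt_S A n : wcnt A alpha (S n) = wcnt A alpha n + (if A (S n) then w (S n) else 0).
Proof. reflexivity. Qed.

Lemma Ncnt_S n : Ncnt alpha (S n) = Ncnt alpha n + w (S n).
Proof. reflexivity. Qed.

Lemma wcnt_bounds A n : 0 <= wcnt A alpha n <= Ncnt alpha n.
Proof.
  induction n as [|n IH]; [cbn; lra|].
  rewrite wcnt_S, Ncnt_S. pose proof (Rpower_pos (INR (S n)) alpha).
  destruct (A (S n)); lra.
Qed.

Lemma Ncnt_pos n : (1 <= n)%nat -> 0 < Ncnt alpha n.
Proof.
  destruct n as [|n]; [lia|]. intros _. rewrite Ncnt_S.
  pose proof (proj1 (wcnt_bounds (fun _ => true) n)). pose proof (Rpower_pos (INR (S n)) alpha).
  unfold Ncnt in *; lra.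
Qed.

Lemma wcnt_le_incl B A n : inclN B A -> wcnt B alpha n <= wcnt A alpha n.
Proof.
  intros HBA. induction n as [|n IH]; [cbn; lra|].
  rewrite !wcnt_S. pose proof (Rpower_pos (INR (S n)) alpha).
  destruct (B (S n)) eqn:HB.
  - rewrite (HBA (S n)); [lra|lia|exact HB].
  - destruct (A (S n)); lra.
Qed.

Fixpoint abel_sum (e : nat -> R) (n : nat) : R :=
  match n with
  | O => 0
  | S m => abel_sum e m + e m * (w (S m) - w m)
  end.

Lemma wcnt_sub_abel B d n :
  wcnt B alpha n - d * Ncnt alpha n =
  (cnt B n - d * INR n) * w n - abel_sum (fun k => cnt B k - d * INR k) n.
Proof.
  induction n as [|n IH]; [cbn; ring|].
  assert (Hw : wcnt B alpha n = d * Ncnt alpha n + ((cnt B n - d * INR n) * w n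
                 - abel_sum (fun k => cnt B k - d * INR k) n)) by lra.
  rewrite wcnt_S, Ncnt_S, Hw. cbn [abel_sum cnt]. rewrite S_INR.
  destruct (B (S n)); ring.
Qed.

Lemma Ncnt_abel n : Ncnt alpha n = INR n * w n - abel_sum INR n.
Proof.
  induction n as [|n IH]; [cbn; ring|].
  rewrite Ncnt_S. cbn [abel_sum]. rewrite IH, S_INR. ring.
Qed.

Lemma weight_monotone :
  (forall k, (1 <= k)%nat -> w k <= w (S k)) \/ (forall k, (1 <= k)%nat -> w (S k) <= w k).
Proof.
  assert (Hk : forall k, (1 <= k)%nat -> 0 < INR k <= INR (S k)).
  { intros k Hk. split; [apply lt_0_INR; lia|apply le_INR; lia]. }
  destruct (Rle_or_lt 0 alpha) as [Ha|Ha].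
  - left. intros k H1. apply Rle_Rpower_l; auto.
  - right. intros k H1. apply Rpower_le_l_nonpos; auto; lra.
Qed.

Fixpoint weight_variation (n : nat) : R :=
  match n with
  | O => 0
  | S m => weight_variation m + INR m * Rabs (w (S m) - w m)
  end.

Lemma weight_variation_nonneg n : 0 <= weight_variation n.
Proof.
  induction n as [|n IH]; cbn [weight_variation]; [lra|].
  pose proof (pos_INR n). pose proof (Rabs_pos (w (S n) - w n)). nra.
Qed.

(* Since [w] is monotone on [1, oo) and the [k = 0] term carries the factor
   [INR 0 = 0], the summands of [abel_sum INR] all have the same sign. *)
Lemma weight_variation_eq n : weight_variation n = Rabs (abel_sum INR n).
Proof.
  assert (Hterm : forall k, INR k * Rabs (w (S k) - w k) = Rabs (INR k * (w (S k) - w k))).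
  { intros k. rewrite Rabs_mult, (Rabs_pos_eq (INR k)) by apply pos_INR. reflexivity. }
  destruct weight_monotone as [Hm|Hm].
  - assert (Heq : abel_sum INR n = weight_variation n).
    { induction n as [|n IH]; [reflexivity|]. cbn [abel_sum weight_variation].
      rewrite IH, Hterm, Rabs_pos_eq; [reflexivity|].
      destruct n as [|n]; [rewrite Rmult_0_l; lra|].
      apply Rmult_le_pos; [apply pos_INR|]. pose proof (Hm (S n) ltac:(lia)). lra. }
    rewrite Heq, Rabs_pos_eq; [reflexivity|apply weight_variation_nonneg].
  - assert (Heq : abel_sum INR n = - weight_variation n).
    { induction n as [|n IH]; [cbn; ring|]. cbn [abel_sum weight_variation].
      rewrite IH, Hterm, Rabs_left1; [ring|].
      destruct n as [|n]; [rewrite Rmult_0_l; lra|].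
      apply Rmult_le_0_l; [apply pos_INR|]. pose proof (Hm (S n) ltac:(lia)). lra. }
    rewrite Heq, Rabs_Ropp, Rabs_pos_eq; [reflexivity|apply weight_variation_nonneg].
Qed.

Lemma weight_variation_le n : weight_variation n <= INR n * w n + Ncnt alpha n.
Proof.
  rewrite weight_variation_eq.
  replace (abel_sum INR n) with (INR n * w n - Ncnt alpha n) by (rewrite Ncnt_abel; ring).
  pose proof (proj1 (wcnt_bounds (fun _ => true) n)).
  assert (0 <= INR n * w n) by (apply Rmult_le_pos; [apply pos_INR|apply Rlt_le, Rpower_pos]).
  unfold Ncnt in *. apply Rabs_le; lra.
Qed.

Lemma abel_sum_tail_le e eps K :
  0 <= eps -> (forall k, (K <= k)%nat -> Rabs (e k) <= eps * INR k) ->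
  forall n, (K <= n)%nat -> Rabs (abel_sum e n - abel_sum e K) <= eps * weight_variation n.
Proof.
  intros Heps He.
  assert (Htail : forall p, Rabs (abel_sum e (K + p) - abel_sum e K)
                            <= eps * (weight_variation (K + p) - weight_variation K)).
  { induction p as [|p IH].
    - rewrite Nat.add_0_r, Rminus_diag, Rabs_R0. lra.
    - rewrite Nat.add_succ_r. cbn [abel_sum weight_variation].
      set (m := (K + p)%nat) in *. set (dw := w (S m) - w m).
      assert (Hm : Rabs (e m * dw) <= eps * (INR m * Rabs dw)).
      { rewrite Rabs_mult, <- Rmult_assoc.
        apply Rmult_le_compat_r; [apply Rabs_pos|apply He; lia]. }
      replace (abel_sum e m + e m * dw - abel_sum e K)
        with ((abel_sum e m - abel_sum e K) + e m * dw) by ring.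
      eapply Rle_trans; [apply Rabs_triang|]. lra. }
  intros n Hn. replace n with (K + (n - K))%nat by lia.
  pose proof (weight_variation_nonneg K). specialize (Htail (n - K)%nat). nra.
Qed.

Lemma Ncnt_ge_nonpos n m : alpha <= 0 -> (n <= m)%nat -> INR n * w m <= Ncnt alpha n.
Proof.
  intros Ha. revert m. induction n as [|n IH]; intros m Hm; [cbn; lra|].
  rewrite Ncnt_S. pose proof (IH m ltac:(lia)).
  replace (INR (S n) * w m) with (INR n * w m + w m) by (rewrite (S_INR n); ring).
  assert (w m <= w (S n)).
  { apply Rpower_le_l_nonpos; auto. split; [apply lt_0_INR|apply le_INR]; lia. }
  lra.
Qed.

Lemma Ncnt_ge_nonneg j p : 0 <= alpha -> Ncnt alpha j + INR p * w (S j) <= Ncnt alpha (j + p).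
Proof.
  intros Ha. induction p as [|p IH]; [rewrite Nat.add_0_r; simpl; lra|].
  rewrite Nat.add_succ_r, Ncnt_S.
  replace (INR (S p) * w (S j)) with (INR p * w (S j) + w (S j)) by (rewrite (S_INR p); ring).
  assert (w (S j) <= w (S (j + p))).
  { apply Rle_Rpower_l; auto. split; [apply lt_0_INR|apply le_INR]; lia. }
  lra.
Qed.

Lemma Ncnt_dominates_last_nonneg n :
  0 <= alpha -> INR n * w n <= 2 * Rpower 2 alpha * Ncnt alpha n.
Proof.
  intros Ha. destruct n as [|m].
  { unfold Ncnt; cbn [INR wcnt]. rewrite Rmult_0_l, Rmult_0_r. lra. }
  assert (Hsplit : exists j p, S m = (j + p)%nat /\ (j <= p)%nat /\ (p <= S j)%nat).
  { destruct (Nat.Even_or_Odd (S m)) as [[j Hj]|[j Hj]];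
      exists j; [exists j | exists (S j)]; lia. }
  destruct Hsplit as (j & p & Hm & Hjp & Hpj). rewrite Hm.
  assert (Hp : INR (j + p) <= 2 * INR p) by (rewrite plus_INR; apply le_INR in Hjp; lra).
  assert (Hw : w (j + p) <= Rpower 2 alpha * w (S j)).
  { rewrite Rpower_mult_distr by (lra || (apply lt_0_INR; lia)).
    apply Rle_Rpower_l; [exact Ha|split; [apply lt_0_INR; lia|]].
    rewrite plus_INR, S_INR. apply le_INR in Hpj. rewrite S_INR in Hpj. lra. }
  assert (Hlast : INR (j + p) * w (j + p) <= 2 * Rpower 2 alpha * (INR p * w (S j))).
  { replace (2 * Rpower 2 alpha * (INR p * w (S j))) with ((2 * INR p) * (Rpower 2 alpha * w (S j)))
      by ring.
    apply Rmult_le_compat; [apply pos_INR|apply Rlt_le, Rpower_pos|exact Hp|exact Hw]. }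
  pose proof (Ncnt_ge_nonneg j p Ha). pose proof (proj1 (wcnt_bounds (fun _ => true) j)).
  pose proof (Rpower_pos 2 alpha). unfold Ncnt in *. nra.
Qed.

Lemma Ncnt_dominates_last : exists L, 0 < L /\ forall n, INR n * w n <= L * Ncnt alpha n.
Proof.
  destruct (Rle_or_lt 0 alpha) as [Ha|Ha].
  - exists (2 * Rpower 2 alpha). split; [pose proof (Rpower_pos 2 alpha); lra|].
    intros n. exact (Ncnt_dominates_last_nonneg n Ha).
  - exists 1. split; [lra|]. intros n. pose proof (Ncnt_ge_nonpos n n ltac:(lra) (le_n n)). lra.
Qed.

(* The weights [k^alpha >= 1/k] dominate the harmonic series; this is the only
   place where [alpha >= -1] is needed. *)
Lemma Ncnt_ge_ln n : -1 <= alpha -> ln (INR n + 1) <= Ncnt alpha n.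
Proof.
  intros Ha. induction n as [|n IH].
  { unfold Ncnt; cbn [INR wcnt]. rewrite Rplus_0_l, ln_1. lra. }
  rewrite Ncnt_S, S_INR. pose proof (pos_INR n).
  assert (Hinv : 0 < / (INR n + 1)) by (apply Rinv_0_lt_compat; lra).
  assert (Hln : ln (INR n + 1 + 1) = ln (INR n + 1) + ln (1 + / (INR n + 1))).
  { rewrite <- ln_mult by lra. f_equal. field. lra. }
  assert (Hw : / (INR n + 1) <= Rpower (INR n + 1) alpha).
  { rewrite <- (Rpower_1 (INR n + 1)), <- Rpower_Ropp, Rpower_1 by lra.
    apply Rle_Rpower; lra. }
  pose proof (ln_1_plus_le _ Hinv). lra.
Qed.

Lemma Ncnt_unbounded M : -1 <= alpha -> exists N0, forall n, (N0 <= n)%nat -> M <= Ncnt alpha n.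
Proof.
  intros Ha. destruct (INR_unbounded (exp M)) as [N0 HN0]. exists N0. intros n Hn.
  apply le_INR in Hn. eapply Rle_trans; [|apply Ncnt_ge_ln, Ha].
  rewrite <- (ln_exp M) at 1. apply Rlt_le, ln_increasing; [apply exp_pos|lra].
Qed.

Lemma wcnt_error_le B d eps K :
  0 <= eps -> (forall k, (K <= k)%nat -> Rabs (cnt B k - d * INR k) <= eps * INR k) ->
  forall n, (K <= n)%nat ->
  Rabs (wcnt B alpha n - d * Ncnt alpha n)
  <= Rabs (abel_sum (fun k => cnt B k - d * INR k) K) + eps * (2 * (INR n * w n) + Ncnt alpha n).
Proof.
  intros Heps He n Hn. rewrite wcnt_sub_abel.
  set (e := fun k => cnt B k - d * INR k).
  change (cnt B n - d * INR n) with (e n).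
  pose proof (abel_sum_tail_le e eps K Heps He n Hn) as Htail.
  pose proof (weight_variation_le n) as Hvar.
  assert (Hhead : Rabs (e n * w n) <= eps * (INR n * w n)).
  { rewrite Rabs_mult, (Rabs_pos_eq (w n)) by apply Rlt_le, Rpower_pos.
    rewrite <- Rmult_assoc. apply Rmult_le_compat_r; [apply Rlt_le, Rpower_pos|apply He, Hn]. }
  replace (e n * w n - abel_sum e n)
    with (e n * w n - (abel_sum e n - abel_sum e K) - abel_sum e K) by ring.
  eapply Rle_trans; [apply Rabs_triang|]. rewrite Rabs_Ropp.
  eapply Rle_trans; [apply Rplus_le_compat_r, Rabs_triang|]. rewrite Rabs_Ropp.
  nra.
Qed.

End Weights.

Lemma is_lim_weighted_ratio B alpha (d : R) :
  -1 <= alpha -> is_lim_seq (fun n => cnt B n / INR n) d ->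
  is_lim_seq (fun n => wcnt B alpha n / Ncnt alpha n) d.
Proof.
  intros Ha Hlim. apply (proj2 (is_lim_seq_spec _ _)) in Hlim. apply (proj1 (is_lim_seq_spec _ _)). intros eps.
  destruct (Ncnt_dominates_last alpha) as [L [HL HLb]].
  pose proof (cond_pos eps) as Heps.
  set (ep := eps / (2 * L + 3)).
  assert (Hep : 0 < ep) by (apply Rdiv_lt_0_compat; lra).
  assert (Hepe : ep * (2 * L + 3) = eps) by (unfold ep; field; lra).
  destruct (Hlim (mkposreal ep Hep)) as [K1 HK1]. cbn [pos] in HK1.
  set (K := Nat.max K1 1).
  assert (He : forall k, (K <= k)%nat -> Rabs (cnt B k - d * INR k) <= ep * INR k).
  { intros k Hk. assert (Hk0 : 0 < INR k) by (apply lt_0_INR; lia).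
    replace (cnt B k - d * INR k) with ((cnt B k / INR k - d) * INR k) by (field; lra).
    rewrite Rabs_mult, (Rabs_pos_eq (INR k)) by lra.
    apply Rmult_le_compat_r; [lra|]. apply Rlt_le, HK1. lia. }
  set (R0 := Rabs (abel_sum alpha (fun k => cnt B k - d * INR k) K)).
  destruct (Ncnt_unbounded alpha (R0 / ep) Ha) as [N0 HN0].
  exists (Nat.max K N0). intros n Hn.
  pose proof (wcnt_error_le alpha B d ep K (Rlt_le _ _ Hep) He n ltac:(lia)) as Herr.
  assert (HN : 0 < Ncnt alpha n) by (apply Ncnt_pos; lia).
  assert (HR0 : R0 <= ep * Ncnt alpha n).
  { pose proof (HN0 n ltac:(lia)) as HM.
    apply Rmult_le_compat_l with (r := ep) in HM; [|lra].
    replace (ep * (R0 / ep)) with R0 in HM by (field; lra). exact HM. }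
  pose proof (HLb n).
  replace (wcnt B alpha n / Ncnt alpha n - d) with ((wcnt B alpha n - d * Ncnt alpha n) / Ncnt alpha n)
    by (field; lra).
  rewrite Rabs_div, (Rabs_pos_eq (Ncnt alpha n)) by lra.
  apply Rlt_div_l; [exact HN|]. rewrite <- Hepe. fold R0 in Herr. nra.
Qed.

Lemma density_is_lim B : has_density B -> is_lim_seq (fun n => cnt B n / INR n) (density B).
Proof. intros [l Hl]. unfold density. rewrite (is_lim_seq_unique _ _ Hl). exact Hl. Qed.

Lemma d_lower_alpha_density B alpha :
  -1 <= alpha -> has_density B -> d_lower_alpha alpha B = density B.
Proof.
  intros Ha Hd. apply is_LimInf_seq_unique, is_lim_LimInf_seq.
  apply is_lim_weighted_ratio, density_is_lim; assumption.
Qed.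

Lemma d_upper_alpha_density B alpha :
  -1 <= alpha -> has_density B -> d_upper_alpha alpha B = density B.
Proof.
  intros Ha Hd. apply is_LimSup_seq_unique, is_lim_LimSup_seq.
  apply is_lim_weighted_ratio, density_is_lim; assumption.
Qed.

Lemma weighted_ratio_le_incl B A alpha n :
  inclN B A -> wcnt B alpha n / Ncnt alpha n <= wcnt A alpha n / Ncnt alpha n.
Proof.
  intros HBA. destruct n as [|n]; [unfold Rdiv; cbn; lra|].
  apply Rmult_le_compat_r; [apply Rlt_le, Rinv_0_lt_compat, Ncnt_pos; lia|].
  apply wcnt_le_incl; exact HBA.
Qed.

Lemma d_lower_alpha_incl B A alpha :
  inclN B A -> Rbar_le (d_lower_alpha alpha B) (d_lower_alpha alpha A).
Proof. intros HBA. apply LimInf_le. exists O. intros n _. apply weighted_ratio_le_incl; exact HBA. Qed.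

Lemma d_upper_alpha_incl B A alpha :
  inclN B A -> Rbar_le (d_upper_alpha alpha B) (d_upper_alpha alpha A).
Proof. intros HBA. apply LimSup_le. exists O. intros n _. apply weighted_ratio_le_incl; exact HBA. Qed.

Lemma d_alpha_finite A alpha : exists a b,
  d_lower_alpha alpha A = Finite a /\ d_upper_alpha alpha A = Finite b /\ a <= b.
Proof.
  set (u := fun n => wcnt A alpha n / Ncnt alpha n).
  assert (Hu : forall n, 0 <= u n <= 1).
  { intros n. unfold u. destruct n as [|n]; [unfold Rdiv; cbn; lra|].
    assert (HN : 0 < Ncnt alpha (S n)) by (apply Ncnt_pos; lia).
    pose proof (wcnt_bounds alpha A (S n)).
    split; [apply Rdiv_le_0_compat; lra|]. apply (Rdiv_le_1 _ _ HN); lra. }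
  assert (H0 : Rbar_le 0 (LimInf_seq u)).
  { rewrite <- (LimInf_seq_const 0). apply LimInf_le. exists O. intros n _. apply Hu. }
  assert (H1 : Rbar_le (LimSup_seq u) 1).
  { rewrite <- (LimSup_seq_const 1). apply LimSup_le. exists O. intros n _. apply Hu. }
  pose proof (LimSup_LimInf_seq_le u) as Hle.
  unfold d_lower_alpha, d_upper_alpha. fold u.
  destruct (LimInf_seq u) as [a| |], (LimSup_seq u) as [b| |]; cbn in *; try contradiction.
  exists a, b. auto.
Qed.

Theorem corollary4p5 (A : nat -> bool) :
  Rbar_le (dd_lower A) (d_lower_infty A) /\
  Rbar_le (d_lower_infty A) (d_upper_infty A) /\
  Rbar_le (d_upper_infty A) (dd_upper A).
Proof.
  split; [|split].
  - apply Lub_Rbar_correct. intros x (B & HBA & Hd & ->).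
    apply Glb_Rbar_correct. intros y (alpha & Ha & Hy).
    rewrite <- Hy, <- (d_lower_alpha_density B alpha Ha Hd). apply d_lower_alpha_incl; exact HBA.
  - destruct (d_alpha_finite A 0) as (a & b & Ha & Hb & Hab).
    apply Rbar_le_trans with (Finite a); [apply Glb_Rbar_correct; exists 0; split; [lra|exact Ha]|].
    apply Rbar_le_trans with (Finite b); [exact Hab|].
    apply Lub_Rbar_correct. exists 0. split; [lra|exact Hb].
  - apply Lub_Rbar_correct. intros y (alpha & Ha & Hy).
    apply Glb_Rbar_correct. intros x (C & HAC & Hd & ->).
    rewrite <- Hy, <- (d_upper_alpha_density C alpha Ha Hd). apply d_upper_alpha_incl; exact HAC.
Qed.
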